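(* Let $(K(n,m),{\bf p},{\bf q})$ be a complete bipartite framework in $\mathbb R^d$ whose configuration $({\bf p},{\bf q})$ has affine span of dimension at most $n+m-2$. If ${\bf p}$ and ${\bf q}$ are strictly separated by a quadric, then $(K(n,m),{\bf p},{\bf q})$ is not universally rigid.
   Context: A complete bipartite framework $(K(n,m),{\bf p},{\bf q})$ in $\mathbb R^d$ consists of points ${\bf p}=({\bf p}_1,\dots,{\bf p}_n)$ and ${\bf q}=({\bf q}_1,\dots,{\bf q}_m)$ in $\mathbb R^d$ (the two vertex classes), with a bar joining ${\bf p}_i$ and ${\bf q}_j$ for every $i,j$ and no other bars. A framework $(G,{\bf p})$ (graph $G$ on vertices $1,\dots,N$, points ${\bf p}_i\in\mathbb R^d$) is universally rigid if for every $D$ and every configuration ${\bf p}'$ in $\mathbb R^D$ with $|{\bf p}'_i-{\bf p}'_j|=|{\bf p}_i-{\bf p}_j|$ for all edges $\{i,j\}$ of $G$, one has $|{\bf p}'_i-{\bf p}'_j|=|{\bf p}_i-{\bf p}_j|$ for all pairs $i,j$. For ${\bf x}\in\mathbb R^d$ let $\hat{\bf x}\in\mathbb R^{d+1}$ be ${\bf x}$ with a $1$ appended as last coordinate. ${\bf p}$ and ${\bf q}$ are strictly separated by a quadric if there is a symmetric $(d+1)\times(d+1)$ real matrix $A$ with $\hat{\bf q}_j^tA\hat{\bf q}_j<0<\hat{\bf p}_i^tA\hat{\bf p}_i$ for all $i=1,\dots,n$, $j=1,\dots,m$. *)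

From Stdlib Require Import Reals Arith.
Open Scope R_scope.

(* A point of R^d is a function nat -> R; only coordinates 0..d-1 matter.
   A configuration of N points is a function nat -> (nat -> R); only
   indices 0..N-1 matter. *)

Fixpoint sumR (k : nat) (f : nat -> R) : R :=
  match k with
  | O => 0
  | S k' => sumR k' f + f k'
  end.

Definition dist2 (d : nat) (x y : nat -> R) : R :=
  sumR d (fun t => (x t - y t) * (x t - y t)).

Definition universally_rigid (d N : nat) (E : nat -> nat -> Prop)
    (x : nat -> nat -> R) : Prop :=
  forall (D : nat) (x' : nat -> nat -> R),
    (forall i j, (i < N)%nat -> (j < N)%nat -> E i j ->
       dist2 D (x' i) (x' j) = dist2 d (x i) (x j)) ->
    forall i j, (i < N)%nat -> (j < N)%nat ->
       dist2 D (x' i) (x' j) = dist2 d (x i) (x j).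

Definition Knm_edge (n m : nat) (i j : nat) : Prop :=
  ((i < n)%nat /\ (n <= j < n + m)%nat) \/ ((j < n)%nat /\ (n <= i < n + m)%nat).

Definition join_config (n : nat) (p q : nat -> nat -> R) : nat -> nat -> R :=
  fun i => if (i <? n)%nat then p i else q (i - n)%nat.

Definition bipartite_universally_rigid (d n m : nat) (p q : nat -> nat -> R) : Prop :=
  universally_rigid d (n + m) (Knm_edge n m) (join_config n p q).

Definition affine_span_dim_le (d N : nat) (x : nat -> nat -> R) (k : nat) : Prop :=
  exists (c : nat -> R) (u : nat -> nat -> R),
    forall v, (v < N)%nat ->
      exists a : nat -> R,
        forall t, (t < d)%nat -> x v t = c t + sumR k (fun j => a j * u j t).

Definition hat (d : nat) (x : nat -> R) : nat -> R :=
  fun t => if (t <? d)%nat then x t else 1.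

Definition qform (d : nat) (A : nat -> nat -> R) (y : nat -> R) : R :=
  sumR (S d) (fun a => sumR (S d) (fun b => y a * A a b * y b)).

Definition strictly_separated_by_quadric (d n m : nat) (p q : nat -> nat -> R) : Prop :=
  exists A : nat -> nat -> R,
    (forall a b, (a <= d)%nat -> (b <= d)%nat -> A a b = A b a) /\
    (forall i, (i < n)%nat -> 0 < qform d A (hat d (p i))) /\
    (forall j, (j < m)%nat -> qform d A (hat d (q j)) < 0).

(* Write ŷ_v for the hatted points, s_v = +1 on p and -1 on q, and let A be the
   separating quadric, so that s_v ŷ_v^t A ŷ_v > 0.  For a small λ > 0 put
   γ_v = sqrt(2λ(s_v ŷ_v^t A ŷ_v - λ|Aŷ_v|^2)) and lift every vertex to
   (ŷ_v - s_v λ A ŷ_v, λ A ŷ_v, γ_v e_(c v)).  By symmetry of A, for v in p and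
   w in q the squared distance of the lifts is |ŷ_v - ŷ_w|^2 - γ_v^2 - γ_w^2
   + |γ_v e_(c v) - γ_w e_(c w)|^2, which is the bar length as soon as
   c v <> c w.  Both "one extra coordinate per class" and "one extra coordinate
   per vertex" are therefore realizations of the bars, but two distinct vertices
   of the same class are 2 γ_v γ_w > 0 closer in the first than in the second.
   The dimension hypothesis only excludes K(1,1) with coinciding endpoints. *)
From Stdlib Require Import Reals Arith Lia Lra Psatz.
Open Scope R_scope.

Lemma sumR_ext k f g : (forall t, (t < k)%nat -> f t = g t) -> sumR k f = sumR k g.
Proof.
  induction k as [|k IH]; simpl; intros H; [reflexivity|].
  rewrite IH, H; [reflexivity | lia | intros; apply H; lia].
Qed.

Lemma sumR_plus k f g : sumR k (fun t => f t + g t) = sumR k f + sumR k g.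
Proof. induction k as [|k IH]; simpl; [lra | rewrite IH; lra]. Qed.

Lemma sumR_scal k c f : sumR k (fun t => c * f t) = c * sumR k f.
Proof. induction k as [|k IH]; simpl; [lra | rewrite IH; lra]. Qed.

Lemma sumR_swap k l F :
  sumR k (fun a => sumR l (fun b => F a b)) = sumR l (fun b => sumR k (fun a => F a b)).
Proof.
  induction k as [|k IH]; simpl.
  - induction l as [|l IHl]; simpl; [reflexivity | rewrite <- IHl; lra].
  - rewrite IH, <- sumR_plus. reflexivity.
Qed.

Lemma sumR_add_range a b f :
  sumR (a + b) f = sumR a f + sumR b (fun t => f (a + t)%nat).
Proof.
  induction b as [|b IH]; simpl.
  - rewrite Nat.add_0_r. lra.
  - rewrite Nat.add_succ_r. simpl. rewrite IH. lra.
Qed.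

Lemma sumR_nonneg k f : (forall t, (t < k)%nat -> 0 <= f t) -> 0 <= sumR k f.
Proof.
  induction k as [|k IH]; simpl; intros H; [lra|].
  assert (0 <= sumR k f) by (apply IH; intros; apply H; lia).
  assert (0 <= f k) by (apply H; lia). lra.
Qed.

Lemma sumR_indicator k c r :
  sumR k (fun t => if (t =? c)%nat then r else 0) = if (c <? k)%nat then r else 0.
Proof.
  induction k as [|k IH]; simpl; [destruct c; reflexivity|].
  rewrite IH.
  destruct (Nat.ltb_spec c k), (Nat.eqb_spec k c), (Nat.ltb_spec c (S k)); lia || lra.
Qed.

Definition dot (k : nat) (x y : nat -> R) : R := sumR k (fun t => x t * y t).

Definition mx_apply (k : nat) (A : nat -> nat -> R) (y : nat -> R) : nat -> R :=
  fun a => sumR k (fun b => A a b * y b).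

Lemma dot_self_nonneg k x : 0 <= dot k x x.
Proof. apply sumR_nonneg. intros. nra. Qed.

Lemma dot_mx_sym k A x y :
  (forall a b, (a < k)%nat -> (b < k)%nat -> A a b = A b a) ->
  dot k x (mx_apply k A y) = dot k y (mx_apply k A x).
Proof.
  intros Hsym. unfold dot, mx_apply.
  rewrite (sumR_ext _ _ (fun a => sumR k (fun b => x a * A a b * y b))).
  2:{ intros. rewrite <- sumR_scal. apply sumR_ext. intros. ring. }
  rewrite sumR_swap. apply sumR_ext. intros b Hb.
  rewrite <- sumR_scal. apply sumR_ext. intros a Ha. rewrite (Hsym a b) by lia. ring.
Qed.

Lemma qform_dot d A y : qform d A y = dot (S d) y (mx_apply (S d) A y).
Proof.
  unfold qform, dot, mx_apply. apply sumR_ext. intros.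
  rewrite <- sumR_scal. apply sumR_ext. intros. ring.
Qed.

Lemma qform_ext d A x y : (forall t, x t = y t) -> qform d A x = qform d A y.
Proof.
  intros H. unfold qform. apply sumR_ext. intros. apply sumR_ext. intros.
  rewrite !H. reflexivity.
Qed.

Definition concat (k : nat) (x y : nat -> R) : nat -> R :=
  fun t => if (t <? k)%nat then x t else y (t - k)%nat.

Definition basis_scaled (c : nat) (a : R) : nat -> R :=
  fun t => if (t =? c)%nat then a else 0.

Lemma dist2_sym k x y : dist2 k x y = dist2 k y x.
Proof. unfold dist2. apply sumR_ext. intros. ring. Qed.

Lemma dist2_concat k l x y x' y' :
  dist2 (k + l) (concat k x y) (concat k x' y') = dist2 k x x' + dist2 l y y'.
Proof.
  unfold dist2. rewrite sumR_add_range. f_equal; apply sumR_ext; intros t Ht; unfold concat.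
  - rewrite (proj2 (Nat.ltb_lt t k)) by lia. reflexivity.
  - rewrite (proj2 (Nat.ltb_ge (k + t) k)) by lia.
    replace (k + t - k)%nat with t by lia. reflexivity.
Qed.

Lemma dist2_hat d x y : dist2 (S d) (hat d x) (hat d y) = dist2 d x y.
Proof.
  change (hat d x) with (concat d x (fun _ => 1)).
  change (hat d y) with (concat d y (fun _ => 1)).
  rewrite <- Nat.add_1_r, dist2_concat. unfold dist2. simpl. ring.
Qed.

Lemma dist2_basis_same k c a b :
  (c < k)%nat -> dist2 k (basis_scaled c a) (basis_scaled c b) = (a - b) * (a - b).
Proof.
  intros Hc. unfold dist2, basis_scaled.
  rewrite (sumR_ext _ _ (fun t => if (t =? c)%nat then (a - b) * (a - b) else 0)).
  - rewrite sumR_indicator, (proj2 (Nat.ltb_lt c k)) by exact Hc. reflexivity.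
  - intros t _. destruct (t =? c)%nat; ring.
Qed.

Lemma dist2_basis_distinct k c c' a b :
  (c < k)%nat -> (c' < k)%nat -> c <> c' ->
  dist2 k (basis_scaled c a) (basis_scaled c' b) = a * a + b * b.
Proof.
  intros Hc Hc' Hneq. unfold dist2, basis_scaled.
  rewrite (sumR_ext _ _ (fun t => (if (t =? c)%nat then a * a else 0)
                                + (if (t =? c')%nat then b * b else 0))).
  - rewrite sumR_plus, !sumR_indicator.
    rewrite (proj2 (Nat.ltb_lt c k)), (proj2 (Nat.ltb_lt c' k)) by assumption. reflexivity.
  - intros t _. destruct (Nat.eqb_spec t c), (Nat.eqb_spec t c'); subst; lia || ring.
Qed.

Lemma dist2_shift_opposite k (x y u v : nat -> R) l :
  dot k x v = dot k y u ->
  dist2 k (fun t => x t - 1 * l * u t) (fun t => y t - -1 * l * v t)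
    + dist2 k (fun t => l * u t) (fun t => l * v t)
  = dist2 k x y - 2 * l * (1 * dot k x u - l * dot k u u)
                - 2 * l * (-1 * dot k y v - l * dot k v v).
Proof.
  intros Hxv.
  assert (Hid : forall k,
    dist2 k (fun t => x t - 1 * l * u t) (fun t => y t - -1 * l * v t)
      + dist2 k (fun t => l * u t) (fun t => l * v t)
    = dist2 k x y - 2 * l * (1 * dot k x u - l * dot k u u)
                  - 2 * l * (-1 * dot k y v - l * dot k v v)
                  - 2 * l * (dot k x v - dot k y u)).
  { intros j. unfold dist2, dot. induction j; simpl; [ring | lra]. }
  rewrite Hid, Hxv. ring.
Qed.

Section Lifting.

Variables (e : nat) (A : nat -> nat -> R) (l : R).

Definition slack (s : R) (y : nat -> R) : R :=
  2 * l * (s * dot e y (mx_apply e A y)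
           - l * dot e (mx_apply e A y) (mx_apply e A y)).

Definition lift (s : R) (c : nat) (y : nat -> R) : nat -> R :=
  concat e (fun t => y t - s * l * mx_apply e A y t)
    (concat e (fun t => l * mx_apply e A y t) (basis_scaled c (sqrt (slack s y)))).

Lemma dist2_lift_opposite N c c' y z :
  (forall a b, (a < e)%nat -> (b < e)%nat -> A a b = A b a) ->
  (c < N)%nat -> (c' < N)%nat -> c <> c' ->
  0 <= slack 1 y -> 0 <= slack (-1) z ->
  dist2 (e + (e + N)) (lift 1 c y) (lift (-1) c' z) = dist2 e y z.
Proof.
  intros Hsym Hc Hc' Hneq Hy Hz. unfold lift.
  rewrite !dist2_concat, dist2_basis_distinct by assumption.
  rewrite !sqrt_sqrt by assumption.
  pose proof (dist2_shift_opposite e y z (mx_apply e A y) (mx_apply e A z) l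
                (dot_mx_sym e A y z Hsym)).
  unfold slack. lra.
Qed.

Lemma dist2_lift_shared_separate N c0 c c' s y z :
  (c0 < N)%nat -> (c < N)%nat -> (c' < N)%nat -> c <> c' ->
  dist2 (e + (e + N)) (lift s c0 y) (lift s c0 z)
    + 2 * sqrt (slack s y) * sqrt (slack s z)
  = dist2 (e + (e + N)) (lift s c y) (lift s c' z).
Proof.
  intros Hc0 Hc Hc' Hneq. unfold lift.
  rewrite !dist2_concat, dist2_basis_same, dist2_basis_distinct by assumption.
  ring.
Qed.

End Lifting.

Lemma exists_small_positive N (f g : nat -> R) :
  (forall v, (v < N)%nat -> 0 < f v) -> (forall v, (v < N)%nat -> 0 <= g v) ->
  exists l, 0 < l /\ forall v, (v < N)%nat -> l * g v < f v.
Proof.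
  induction N as [|N IH]; intros Hf Hg.
  - exists 1. split; [lra | intros; lia].
  - destruct IH as [l0 [Hl0 Hl]]; [intros; apply Hf; lia | intros; apply Hg; lia|].
    assert (HfN : 0 < f N) by (apply Hf; lia).
    assert (HgN : 0 <= g N) by (apply Hg; lia).
    set (l1 := f N / (g N + 1)).
    assert (Hl1 : 0 < l1) by (apply Rdiv_lt_0_compat; lra).
    assert (Hl1g : l1 * g N < f N).
    { unfold l1. apply Rmult_lt_reg_r with (g N + 1); [lra|].
      replace (f N / (g N + 1) * g N * (g N + 1)) with (f N * g N) by (field; lra). nra. }
    exists (Rmin l0 l1). split; [apply Rmin_glb_lt; lra|].
    intros v Hv. pose proof (Rmin_l l0 l1). pose proof (Rmin_r l0 l1).
    destruct (Nat.eq_dec v N) as [->|Hne]; [nra|].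
    assert (0 <= g v) by (apply Hg; lia).
    specialize (Hl v ltac:(lia)). nra.
Qed.

Lemma exists_positive_slack e A N (s : nat -> R) (y : nat -> nat -> R) :
  (forall v, (v < N)%nat -> 0 < s v * dot e (y v) (mx_apply e A (y v))) ->
  exists l, forall v, (v < N)%nat -> 0 < slack e A l (s v) (y v).
Proof.
  intros Hpos.
  destruct (exists_small_positive N _
              (fun v => dot e (mx_apply e A (y v)) (mx_apply e A (y v))) Hpos)
    as [l [Hl Hlt]]; [intros; apply dot_self_nonneg|].
  exists l. intros v Hv. specialize (Hlt v Hv).
  unfold slack. nra.
Qed.

Definition class_sign (n v : nat) : R := if (v <? n)%nat then 1 else -1.

Definition lifted_config (d n : nat) (A : nat -> nat -> R) (l : R) (c : nat -> nat)
    (p q : nat -> nat -> R) : nat -> nat -> R :=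
  fun v => lift (S d) A l (class_sign n v) (c v) (hat d (join_config n p q v)).

Lemma separation_class_sign d n m p q A :
  (forall i, (i < n)%nat -> 0 < qform d A (hat d (p i))) ->
  (forall j, (j < m)%nat -> qform d A (hat d (q j)) < 0) ->
  forall v, (v < n + m)%nat ->
    0 < class_sign n v * dot (S d) (hat d (join_config n p q v))
                               (mx_apply (S d) A (hat d (join_config n p q v))).
Proof.
  intros Hp Hq v Hv. rewrite <- qform_dot. unfold class_sign, join_config.
  destruct (Nat.ltb_spec v n).
  - specialize (Hp v ltac:(lia)). lra.
  - specialize (Hq (v - n)%nat ltac:(lia)). lra.
Qed.

Lemma lifted_config_bars d n m A l c p q N :
  (forall a b, (a <= d)%nat -> (b <= d)%nat -> A a b = A b a) ->
  (forall v, (v < n + m)%nat ->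
     0 <= slack (S d) A l (class_sign n v) (hat d (join_config n p q v))) ->
  (forall v, (v < n + m)%nat -> (c v < N)%nat) ->
  (forall v w, (v < n)%nat -> (n <= w)%nat -> c v <> c w) ->
  forall i j, (i < n + m)%nat -> (j < n + m)%nat -> Knm_edge n m i j ->
    dist2 (S d + (S d + N)) (lifted_config d n A l c p q i) (lifted_config d n A l c p q j)
    = dist2 d (join_config n p q i) (join_config n p q j).
Proof.
  intros Hsym Hslack Hc Hsep.
  assert (Hbar : forall v w, (v < n)%nat -> (n <= w < n + m)%nat ->
    dist2 (S d + (S d + N)) (lifted_config d n A l c p q v) (lifted_config d n A l c p q w)
    = dist2 d (join_config n p q v) (join_config n p q w)).
  { intros v w Hv Hw.
    assert (Hsv : class_sign n v = 1)
      by (unfold class_sign; destruct (Nat.ltb_spec v n); [reflexivity | lia]).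
    assert (Hsw : class_sign n w = -1)
      by (unfold class_sign; destruct (Nat.ltb_spec w n); [lia | reflexivity]).
    pose proof (Hslack v ltac:(lia)) as Hv'. pose proof (Hslack w ltac:(lia)) as Hw'.
    unfold lifted_config. rewrite Hsv, Hsw in *.
    rewrite dist2_lift_opposite;
      [ apply dist2_hat | intros; apply Hsym; lia | apply Hc; lia | apply Hc; lia
      | apply Hsep; lia | exact Hv' | exact Hw' ]. }
  intros i j Hi Hj [[Hi' Hj'] | [Hj' Hi']].
  - apply Hbar; lia.
  - rewrite dist2_sym, (dist2_sym d). apply Hbar; lia.
Qed.

Definition class_coord (n v : nat) : nat := if (v <? n)%nat then 0%nat else 1%nat.

Definition vertex_coord (v : nat) : nat := (v + 2)%nat.

Lemma lifted_config_class_gap d n A l p q N v w :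
  (v < N)%nat -> (w < N)%nat -> v <> w -> (v <? n)%nat = (w <? n)%nat ->
  dist2 (S d + (S d + (N + 2))) (lifted_config d n A l (class_coord n) p q v)
                                (lifted_config d n A l (class_coord n) p q w)
    + 2 * sqrt (slack (S d) A l (class_sign n v) (hat d (join_config n p q v)))
        * sqrt (slack (S d) A l (class_sign n w) (hat d (join_config n p q w)))
  = dist2 (S d + (S d + (N + 2))) (lifted_config d n A l vertex_coord p q v)
                                  (lifted_config d n A l vertex_coord p q w).
Proof.
  intros Hv Hw Hvw Hclass. unfold lifted_config.
  assert (Hsign : class_sign n w = class_sign n v)
    by (unfold class_sign; rewrite Hclass; reflexivity).
  assert (Hcoord : class_coord n w = class_coord n v)
    by (unfold class_coord; rewrite Hclass; reflexivity).
  rewrite Hsign, Hcoord.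
  apply dist2_lift_shared_separate;
    unfold class_coord, vertex_coord; [destruct (v <? n)%nat | ..]; lia.
Qed.

Lemma same_class_pair n m :
  (2 <= n)%nat \/ (2 <= m)%nat ->
  exists v w, (v < n + m)%nat /\ (w < n + m)%nat /\ v <> w /\ (v <? n)%nat = (w <? n)%nat.
Proof.
  intros [Hn | Hm].
  - exists 0%nat, 1%nat.
    rewrite (proj2 (Nat.ltb_lt 0 n)), (proj2 (Nat.ltb_lt 1 n)) by lia. repeat split; lia.
  - exists n, (S n).
    rewrite Nat.ltb_irrefl, (proj2 (Nat.ltb_ge (S n) n)) by lia. repeat split; lia.
Qed.

Lemma separated_not_single_point d n m p q :
  strictly_separated_by_quadric d n m p q -> (0 < n)%nat -> (0 < m)%nat ->
  ~ affine_span_dim_le d (n + m) (join_config n p q) 0.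
Proof.
  intros [A [_ [Hp Hq]]] Hn Hm [c [u Hu]].
  destruct (Hu 0%nat ltac:(lia)) as [a Ha], (Hu n ltac:(lia)) as [b Hb].
  assert (Heq : qform d A (hat d (p 0%nat)) = qform d A (hat d (q 0%nat))).
  { apply qform_ext. intros t. unfold hat. destruct (Nat.ltb_spec t d) as [Ht|]; auto.
    specialize (Ha t Ht). specialize (Hb t Ht).
    unfold join_config in Ha, Hb.
    rewrite (proj2 (Nat.ltb_lt 0 n)), Nat.ltb_irrefl, Nat.sub_diag in * by exact Hn.
    simpl in Ha, Hb. lra. }
  specialize (Hp 0%nat Hn). specialize (Hq 0%nat Hm). lra.
Qed.

Lemma separated_class_of_size_two d n m p q :
  (exists k, (k + 2 <= n + m)%nat /\ affine_span_dim_le d (n + m) (join_config n p q) k) ->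
  strictly_separated_by_quadric d n m p q ->
  (2 <= n)%nat \/ (2 <= m)%nat.
Proof.
  intros [k [Hk Haff]] Hsep.
  destruct (le_lt_dec 2 n); [now left|]. destruct (le_lt_dec 2 m); [now right|].
  exfalso. assert (k = 0%nat) by lia. subst k.
  apply (separated_not_single_point d n m p q Hsep); lia || exact Haff.
Qed.

Theorem mainTheorem1 (d n m : nat) (p q : nat -> nat -> R)
  (hdim : exists k : nat, (k + 2 <= n + m)%nat /\
            affine_span_dim_le d (n + m) (join_config n p q) k)
  (hsep : strictly_separated_by_quadric d n m p q) :
  ~ bipartite_universally_rigid d n m p q.
Proof.
  intros Hrigid.
  destruct (same_class_pair n m (separated_class_of_size_two d n m p q hdim hsep))
    as [v [w [Hv [Hw [Hvw Hclass]]]]].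
  destruct hsep as [A [Hsym [Hp Hq]]].
  destruct (exists_positive_slack (S d) A (n + m) (class_sign n)
              (fun v => hat d (join_config n p q v)) (separation_class_sign d n m p q A Hp Hq))
    as [l Hslack].
  assert (Hrealize : forall c, (forall u, (u < n + m)%nat -> (c u < n + m + 2)%nat) ->
      (forall u u', (u < n)%nat -> (n <= u')%nat -> c u <> c u') ->
      dist2 (S d + (S d + (n + m + 2))) (lifted_config d n A l c p q v)
                                        (lifted_config d n A l c p q w)
      = dist2 d (join_config n p q v) (join_config n p q w)).
  { intros c Hc Hsep. apply Hrigid; [|assumption..].
    apply lifted_config_bars; auto. intros; apply Rlt_le, Hslack; assumption. }
  pose proof (lifted_config_class_gap d n A l p q (n + m) v w Hv Hw Hvw Hclass) as Hgap.
  rewrite !Hrealize in Hgap by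
    (intros; unfold class_coord, vertex_coord;
     repeat match goal with |- context [(?a <? ?b)%nat] => destruct (Nat.ltb_spec a b) end;
     lia).
  pose proof (sqrt_lt_R0 _ (Hslack v Hv)). pose proof (sqrt_lt_R0 _ (Hslack w Hw)).
  nra.
Qed.
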